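(* Let $\mathfrak m_1,\mathfrak m_1^*,\mathfrak m_2,\mathfrak m_2^*$ be complex-valued functions on the edges of the lattice strip, and $\phi_j=\int_{\gamma_0}\big(\mathfrak m_j(z)\psi(z)\,dz+\mathfrak m_j^*(z)\psi^*(z)\,d\bar z\big)$ for $j=1,2$. Then $$\phi_1\phi_2+\phi_2\phi_1=\Big(\int_{\gamma_0}\big(-2\,\mathfrak m_1(z)\mathfrak m_2(z)\,dz+2\,\mathfrak m_1^*(z)\mathfrak m_2^*(z)\,d\bar z\big)\Big)\,\mathrm{id}.$$
   Context: Fix integers $a<0<b$, $C=\{a,\dots,b\}$, $C^*=\{a+\frac12,\dots,b-\frac12\}$. $\tilde V$ has basis $(e_\rho)_{\rho\in\{\pm1\}^C}$. For $x'\in C^*$, $\varsigma_{x'}(\rho)$ flips the signs of $\rho_x$ for $x<x'$; $\psi_{x'}e_\rho=\frac{-\rho_{x'-1/2}+i\rho_{x'+1/2}}{\sqrt2}e_{\varsigma_{x'}(\rho)}$, $\psi^*_{x'}e_\rho=\frac{-i\rho_{x'-1/2}+\rho_{x'+1/2}}{\sqrt2}e_{\varsigma_{x'}(\rho)}$. The lattice strip has vertices $C\times\mathbb Z\subset\mathbb C$ and nearest-neighbour edges identified with midpoints; on horizontal edges $x'\in C^*$ at height 0, $\psi(x')=\psi_{x'}$, $\psi^*(x')=\psi^*_{x'}$. $\gamma_0=(a,a+1,\dots,b)$, and for a contour $(w_0,\dots,w_m)$ with $z_j$ the edge joining $w_{j-1},w_j$, $\int(\mathfrak m\psi\,dz+\mathfrak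 m^*\psi^*\,d\bar z)=\sum_j(\mathfrak m(z_j)\psi(z_j)(w_j-w_{j-1})+\mathfrak m^*(z_j)\psi^*(z_j)\overline{(w_j-w_{j-1})})$; scalar integrals $\int(g\,dz+h\,d\bar z)=\sum_j(g(z_j)(w_j-w_{j-1})+h(z_j)\overline{(w_j-w_{j-1})})$. *)

From HB Require Import structures.
From mathcomp Require Import all_boot all_order all_algebra.
Set Implicit Arguments. Unset Strict Implicit. Unset Printing Implicit Defensive.
Import Order.TTheory GRing.Theory Num.Theory.
Local Open Scope ring_scope.

(* Complex numbers: an arbitrary numeric closed field C (e.g. the complexes),
   with imaginary unit 'i, conjugation z^* and square root sqrtC. *)

(* Sites C = {a,...,b}: index k : 'I_(nsites a b) stands for site a + k. *)
Definition nsites (a b : int) : nat := (absz (b - a)).+1.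

(* spin configurations rho in {+-1}^C ; true = +1, false = -1 *)
Notation spin a b := {ffun 'I_(nsites a b) -> bool}.

Notation Vt C a b := {ffun spin a b -> C^o}.

Definition ebasis (C : numClosedFieldType) (a b : int) (r : spin a b) : Vt C a b :=
  [ffun s => (s == r)%:R].

Definition sgnC (C : numClosedFieldType) (s : bool) : C := if s then 1 else -1.

Definition rho_at (C : numClosedFieldType) (a b : int) (r : spin a b) (x : int) : C :=
  if (a <= x) && (x <= b) then sgnC C (r (inord (absz (x - a)))) else 0.

(* A half-integer x' in C^* is written x' = xl + 1/2 with xl : int, a <= xl < b.
   varsigma_{x'} flips rho_x for all sites x < x', i.e. x <= xl. *)
Definition vsigma (a b : int) (xl : int) (r : spin a b) : spin a b :=
  [ffun k : 'I_(nsites a b) => if a + (k : nat)%:Z <= xl then ~~ r k else r k].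

Definition psi_op (C : numClosedFieldType) (a b : int) (xl : int)
    (v : Vt C a b) : Vt C a b :=
  \sum_(r : spin a b) v r *:
     (((- rho_at C r xl + 'i * rho_at C r (xl + 1)) / sqrtC 2) *: ebasis C (vsigma xl r)).

Definition psis_op (C : numClosedFieldType) (a b : int) (xl : int)
    (v : Vt C a b) : Vt C a b :=
  \sum_(r : spin a b) v r *:
     (((- 'i * rho_at C r xl + rho_at C r (xl + 1)) / sqrtC 2) *: ebasis C (vsigma xl r)).

(* Points of the lattice strip are written in doubled coordinates (X, Y) = (2 Re z, 2 Im z);
   vertices are (x, y) in Z x Z, an edge is identified with its midpoint, whose
   doubled coordinates are (x0 + x1, y0 + y1).  Functions on edges are modelled as
   functions int -> int -> _ of the doubled midpoint coordinates (values off edges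
   are irrelevant). *)

Definition vtxC (C : numClosedFieldType) (w : int * int) : C := w.1%:~R + 'i * w.2%:~R.

Definition cint (C : numClosedFieldType) (p : seq (int * int))
    (g h : int -> int -> C) : C :=
  \sum_(j < (size p).-1)
    let w0 := nth (0, 0) p j in
    let w1 := nth (0, 0) p j.+1 in
    let X := w0.1 + w1.1 in let Y := w0.2 + w1.2 in
    let d := vtxC C w1 - vtxC C w0 in
    g X Y * d + h X Y * d^*.

Definition opint (C : numClosedFieldType) (a b : int) (p : seq (int * int))
    (m ms : int -> int -> C) (psi psis : int -> int -> Vt C a b -> Vt C a b)
    (v : Vt C a b) : Vt C a b :=
  \sum_(j < (size p).-1)
    let w0 := nth (0, 0) p j in
    let w1 := nth (0, 0) p j.+1 in
    let X := w0.1 + w1.1 in let Y := w0.2 + w1.2 in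
    let d := vtxC C w1 - vtxC C w0 in
    ((m X Y * d) *: psi X Y v + (ms X Y * d^*) *: psis X Y v).

Definition gamma0 (a b : int) : seq (int * int) :=
  [seq (a + (k : nat)%:Z, 0%Z) | k <- iota 0 (absz (b - a)).+1].

(** Along [gamma0] every step has [dz = dz^* = 1], so [phi_j] is the sum over
    the edges [x'] of [chi_j(x') = m_j psi_x' + m_j^* psi^*_x'], an operator
    sending [e_rho] to a multiple of [e_(varsigma_x' rho)].  For [x' <> y'] the
    flips commute, and [varsigma_y'] changes the sign of the coefficient of
    [chi(x')] exactly when [x' < y']; hence [chi_1(x')] and [chi_2(y')]
    anticommute.  On the diagonal, [rho^2 = 1], ['i^2 = -1] and
    [sqrtC 2 ^+ 2 = 2] turn the anticommutator into the scalar
    [-2 m_1 m_2 + 2 m_1^* m_2^*], the integrand of the right-hand side. *)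
From HB Require Import structures.
From mathcomp Require Import all_boot all_order all_algebra ring zify.
Import Order.TTheory GRing.Theory Num.Theory.
Local Open Scope ring_scope.

Lemma anticommutator_sum (R : pzSemiRingType) (V : lSemiModType R) (I : finType)
    (A B : I -> V -> V) (k : I -> R) :
    (forall i, nmod_morphism (A i)) -> (forall i, nmod_morphism (B i)) ->
    (forall i j, i != j -> forall v, A i (B j v) + B j (A i v) = 0) ->
    (forall i v, A i (B i v) + B i (A i v) = k i *: v) ->
  forall v, \sum_i A i (\sum_j B j v) + \sum_j B j (\sum_i A i v) = (\sum_i k i) *: v.
Proof.
move=> A_add B_add AB_offdiag AB_diag v.
have big_add (F : V -> V) J (G : J -> V) (r : seq J) : nmod_morphism F ->
    F (\sum_(j <- r) G j) = \sum_(j <- r) F (G j).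
  by move=> [F0 FD]; exact: (big_morph F FD F0).
under eq_bigr do rewrite big_add //.
under [in X in _ + X]eq_bigr do rewrite big_add //.
rewrite [in X in _ + X]exchange_big -big_split scaler_suml /=; apply: eq_bigr => i _.
rewrite -big_split /= (bigD1 i) //= AB_diag big1 ?addr0 // => j ji.
by apply: AB_offdiag; rewrite eq_sym.
Qed.

Lemma anticomm_coef_identity (F : numFieldType) (A B i s m1 n1 m2 n2 : F) :
    A ^+ 2 = 1 -> B ^+ 2 = 1 -> i ^+ 2 = -1 -> s ^+ 2 = 2 ->
  (m1 * ((- - A + i * B) / s) + n1 * ((- i * - A + B) / s)) *
    (m2 * ((- A + i * B) / s) + n2 * ((- i * A + B) / s)) +
  (m2 * ((- - A + i * B) / s) + n2 * ((- i * - A + B) / s)) *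
    (m1 * ((- A + i * B) / s) + n1 * ((- i * A + B) / s)) =
  -2 * m1 * m2 + 2 * n1 * n2.
Proof.
move=> A2 B2 i2 s2.
have s_neq0 : s != 0.
  by apply/eqP=> s0; move/eqP: s2; rewrite s0 expr0n /= eq_sym pnatr_eq0.
have two_neq0 : (2 : F) != 0 by rewrite pnatr_eq0.
transitivity ((2 * m1 * m2 * (i ^+ 2 * B ^+ 2 - A ^+ 2)
               + 2 * n1 * n2 * (B ^+ 2 - i ^+ 2 * A ^+ 2)
               + (m2 * n1 + m1 * n2) * 2 * i * (B ^+ 2 - A ^+ 2)) / s ^+ 2).
  by field.
by rewrite A2 B2 i2 s2; field.
Qed.

Section JordanWigner.
Variables (C : numClosedFieldType) (a b : int).

Lemma vsigmaK xl : involutive (@vsigma a b xl).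
Proof. by move=> r; apply/ffunP=> k; rewrite !ffunE; case: ifP => ->; rewrite ?negbK. Qed.

Lemma vsigmaC xl yl : @vsigma a b xl \o vsigma yl =1 vsigma yl \o vsigma xl.
Proof. by move=> r; apply/ffunP=> k; rewrite !ffunE; do 2!case: (_ <= _). Qed.

Lemma rho_vsigma yl (r : spin a b) x :
  rho_at C (vsigma yl r) x = if x <= yl then - rho_at C r x else rho_at C r x.
Proof.
rewrite /rho_at; case: ifP => [/andP[ax xb] | _]; last by case: ifP; rewrite ?oppr0.
rewrite ffunE inordK /nsites; last by lia.
have -> : a + (absz (x - a))%:Z = x by lia.
by case: ifP => //; case: (r _); rewrite /sgnC ?opprK.
Qed.

Lemma rho_at_sqr (r : spin a b) x : a <= x <= b -> rho_at C r x ^+ 2 = 1.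
Proof. by rewrite /rho_at => ->; case: (r _); rewrite /sgnC ?sqrrN expr1n. Qed.

Definition wperm_op (s : spin a b -> spin a b) (c : spin a b -> C)
    (v : Vt C a b) : Vt C a b :=
  [ffun t => c (s t) * v (s t)].

Lemma wperm_op_is_nmod_morphism s c : nmod_morphism (wperm_op s c).
Proof.
split=> [|v w]; apply/ffunP=> t; rewrite !ffunE ?mulr0 //.
by rewrite [LHS]mulrDr.
Qed.

Lemma sum_scale_ebasis s c (v : Vt C a b) : involutive s ->
  \sum_r v r *: (c r *: ebasis C (s r)) = wperm_op s c v.
Proof.
move=> sK; apply/ffunP=> t; rewrite sum_ffunE (bigD1 (s t)) //= big1 ?addr0.
  by rewrite !ffunE sK eqxx /GRing.scale /= mulr1 mulrC.
move=> r /negbTE rst; rewrite !ffunE.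
have -> : (t == s r) = false by apply: contraFF rst => /eqP ->; rewrite sK.
by rewrite mulr0n !scaler0.
Qed.

Lemma wperm_op_anticomm s1 s2 c1 c2 :
    involutive s1 -> involutive s2 -> s1 \o s2 =1 s2 \o s1 ->
    (forall r, c1 (s2 r) = - c1 r) -> (forall r, c2 (s1 r) = c2 r) ->
  forall v, wperm_op s1 c1 (wperm_op s2 c2 v) + wperm_op s2 c2 (wperm_op s1 c1 v) = 0.
Proof.
move=> s1K s2K s12C c1s2 c2s1 v; apply/ffunP=> t; rewrite !ffunE.
set u := s1 (s2 t).
have -> : s1 t = s2 u by rewrite /u [s1 (s2 t)]s12C /= s2K.
have -> : s2 t = s1 u by rewrite /u s1K.
by rewrite s2K c1s2 c2s1; ring.
Qed.

Lemma wperm_op_anticomm_diag s c1 c2 (k : C) : involutive s ->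
    (forall t, c1 (s t) * c2 t + c2 (s t) * c1 t = k) ->
  forall v, wperm_op s c1 (wperm_op s c2 v) + wperm_op s c2 (wperm_op s c1 v) = k *: v.
Proof.
move=> sK ck v; apply/ffunP=> t; rewrite !ffunE !sK -(ck t).
by rewrite [RHS]mulrDl; ring.
Qed.

Definition psi_coef xl (r : spin a b) : C :=
  (- rho_at C r xl + 'i * rho_at C r (xl + 1)) / sqrtC 2.

Definition psis_coef xl (r : spin a b) : C :=
  (- 'i * rho_at C r xl + rho_at C r (xl + 1)) / sqrtC 2.

Definition edge_coef (m ms : int -> int -> C) xl (r : spin a b) : C :=
  m (2 * xl + 1) 0 * psi_coef xl r + ms (2 * xl + 1) 0 * psis_coef xl r.

Definition edge_op m ms xl : Vt C a b -> Vt C a b :=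
  wperm_op (vsigma xl) (edge_coef m ms xl).

Lemma psi_opE xl : @psi_op C a b xl =1 wperm_op (vsigma xl) (psi_coef xl).
Proof. by move=> v; apply: sum_scale_ebasis; apply: vsigmaK. Qed.

Lemma psis_opE xl : @psis_op C a b xl =1 wperm_op (vsigma xl) (psis_coef xl).
Proof. by move=> v; apply: sum_scale_ebasis; apply: vsigmaK. Qed.

Lemma edge_coef_vsigma_lt m ms xl yl r : xl < yl ->
  edge_coef m ms xl (vsigma yl r) = - edge_coef m ms xl r.
Proof.
move=> lt_xy; rewrite /edge_coef /psi_coef /psis_coef !rho_vsigma.
by rewrite ifT ?ifT; [ring | lia | lia].
Qed.

Lemma edge_coef_vsigma_gt m ms xl yl r : yl < xl ->
  edge_coef m ms xl (vsigma yl r) = edge_coef m ms xl r.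
Proof.
by move=> lt_yx; rewrite /edge_coef /psi_coef /psis_coef !rho_vsigma !ifF //; lia.
Qed.

Lemma edge_coef_anticomm m1 ms1 m2 ms2 xl (t : spin a b) : a <= xl < b ->
  edge_coef m1 ms1 xl (vsigma xl t) * edge_coef m2 ms2 xl t
    + edge_coef m2 ms2 xl (vsigma xl t) * edge_coef m1 ms1 xl t =
  -2 * m1 (2 * xl + 1) 0 * m2 (2 * xl + 1) 0
    + 2 * ms1 (2 * xl + 1) 0 * ms2 (2 * xl + 1) 0.
Proof.
move=> xl_edge; rewrite /edge_coef /psi_coef /psis_coef !rho_vsigma lexx ifF; last by lia.
apply: anticomm_coef_identity; rewrite ?sqrCi ?sqrtCK //; apply: rho_at_sqr; lia.
Qed.

Lemma edge_op_anticomm m1 ms1 m2 ms2 xl yl : xl != yl -> forall v,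
  edge_op m1 ms1 xl (edge_op m2 ms2 yl v) + edge_op m2 ms2 yl (edge_op m1 ms1 xl v) = 0.
Proof.
move=> xy v; wlog lt_xy : m1 ms1 m2 ms2 xl yl xy / xl < yl => [sym|].
  have [/sym-> // | lt_yx] : xl < yl \/ yl < xl by lia.
  by rewrite addrC sym // eq_sym.
apply: wperm_op_anticomm; [exact: vsigmaK | exact: vsigmaK | exact: vsigmaC | |].
  by move=> r; apply: edge_coef_vsigma_lt.
by move=> r; apply: edge_coef_vsigma_gt.
Qed.

Lemma edge_op_anticomm_diag m1 ms1 m2 ms2 xl : a <= xl < b -> forall v,
  edge_op m1 ms1 xl (edge_op m2 ms2 xl v) + edge_op m2 ms2 xl (edge_op m1 ms1 xl v) =
  (-2 * m1 (2 * xl + 1) 0 * m2 (2 * xl + 1) 0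
     + 2 * ms1 (2 * xl + 1) 0 * ms2 (2 * xl + 1) 0) *: v.
Proof.
move=> xl_edge; apply: wperm_op_anticomm_diag; first exact: vsigmaK.
by move=> t; apply: edge_coef_anticomm.
Qed.

Lemma big_gamma0 {T : nmodType} (F : int -> int -> C -> T) : a <= b ->
  \sum_(j < (size (gamma0 a b)).-1)
    (let w0 := nth (0, 0) (gamma0 a b) j in
     let w1 := nth (0, 0) (gamma0 a b) j.+1 in
     F (w0.1 + w1.1) (w0.2 + w1.2) (vtxC C w1 - vtxC C w0)) =
  \sum_(j < absz (b - a)) F (2 * (a + j%:Z) + 1) 0 1.
Proof.
move=> le_ab; rewrite size_map size_iota /=; apply: eq_bigr => j _.
have lt_j := ltn_ord j.
rewrite /= !(nth_map 0%N) ?size_iota ?nth_iota /=; try lia.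
have -> : a + j%:Z + (a + (1 + j)%:Z) = 2 * (a + j%:Z) + 1 by lia.
have -> : a + (1 + j)%:Z = (a + j%:Z) + 1 by lia.
by rewrite addr0 /vtxC /= !mulr0 !addr0 intrD addrAC subrr add0r.
Qed.

Lemma cint_gamma0 g h : a <= b ->
  @cint C (gamma0 a b) g h =
  \sum_(j < absz (b - a)) (g (2 * (a + j%:Z) + 1) 0 + h (2 * (a + j%:Z) + 1) 0).
Proof.
move=> le_ab; rewrite /cint (big_gamma0 (fun X Y d => g X Y * d + h X Y * d^*)) //.
by under eq_bigr do rewrite conjC1 !mulr1.
Qed.

Lemma opint_gamma0 psi psis m ms : a <= b ->
    (forall xl : int, a <= xl < b ->
      psi (2 * xl + 1) 0 = @psi_op C a b xl /\ psis (2 * xl + 1) 0 = @psis_op C a b xl) ->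
  forall v, opint (gamma0 a b) m ms psi psis v =
  \sum_(j < absz (b - a)) edge_op m ms (a + j%:Z) v.
Proof.
move=> le_ab psiE v; rewrite /opint.
rewrite (big_gamma0 (fun X Y d => (m X Y * d) *: psi X Y v + (ms X Y * d^*) *: psis X Y v)) //.
apply: eq_bigr => j _; have [-> ->] := psiE (a + j%:Z) ltac:(have := ltn_ord j; lia).
apply/ffunP=> t; rewrite psi_opE psis_opE conjC1 !mulr1 !ffunE.
by rewrite /edge_coef /GRing.scale /=; ring.
Qed.

End JordanWigner.

Theorem proposition3p12 (C : numClosedFieldType) (a b : int)
    (ha : a < 0) (hb : 0 < b)
    (psi psis : int -> int -> Vt C a b -> Vt C a b)
    (hpsi : forall xl : int, a <= xl < b ->
        psi (2 * xl + 1) 0 = @psi_op C a b xl /\ psis (2 * xl + 1) 0 = @psis_op C a b xl)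
    (m1 m1s m2 m2s : int -> int -> C) :
  let phi1 := opint (gamma0 a b) m1 m1s psi psis in
  let phi2 := opint (gamma0 a b) m2 m2s psi psis in
  forall v : Vt C a b,
    phi1 (phi2 v) + phi2 (phi1 v) =
    @cint C (gamma0 a b) (fun X Y => -2 * m1 X Y * m2 X Y)
                        (fun X Y => 2 * m1s X Y * m2s X Y) *: v.
Proof.
move=> phi1 phi2 v; have le_ab : a <= b by lia.
rewrite /phi1 /phi2 !opint_gamma0 // cint_gamma0 //.
pose chi m ms (j : 'I_(absz (b - a))) := edge_op C a b m ms (a + j%:Z).
apply: (@anticommutator_sum _ _ _ (chi m1 m1s) (chi m2 m2s)).
- by move=> j; apply: wperm_op_is_nmod_morphism.
- by move=> j; apply: wperm_op_is_nmod_morphism.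
- move=> i j ij; apply: edge_op_anticomm.
  by apply: contra ij => /eqP/addrI/eqP; rewrite eqz_nat.
- by move=> j; apply: edge_op_anticomm_diag; have := ltn_ord j; lia.
Qed.
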